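(* Let $\Omega\subset\mathbb{R}^{n+m}$ be a bounded open set, $s\in(0,1)$ and $p\in(1,\infty)$. There is a constant $C>0$ such that \[ \|u\|_{L^p(\Omega)}\le C[u]_{\mathcal W^{s,p}(\mathbb{R}^{n+m})}\qquad\forall u\in\widetilde{\mathcal W}^{s,p}(\Omega). \]
   Context: Points of $\mathbb{R}^{n+m}$ are $(x,y)$, $x\in\mathbb{R}^n$, $y\in\mathbb{R}^m$. \[ [u]^p_{\mathcal W^{s,p}(\mathbb{R}^{n+m})}=\int_{\mathbb{R}^{n+m}}\int_{\mathbb{R}^n}\frac{|u(x,y)-u(z,y)|^p}{|x-z|^{n+sp}}\,dz\,dx\,dy+\int_{\mathbb{R}^{n+m}}\int_{\mathbb{R}^m}\frac{|u(x,y)-u(x,w)|^p}{|y-w|^{m+sp}}\,dw\,dx\,dy, \] and $\widetilde{\mathcal W}^{s,p}(\Omega)$ is the set of functions $u\in L^p(\mathbb{R}^{n+m})$ with $[u]_{\mathcal W^{s,p}(\mathbb{R}^{n+m})}<\infty$ and $u\equiv0$ in $\mathbb{R}^{n+m}\setminus\Omega$. *)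

From HB Require Import structures.
From mathcomp Require Import all_boot all_order all_algebra.
From mathcomp Require Import all_classical all_reals all_analysis.
Set Implicit Arguments. Unset Strict Implicit. Unset Printing Implicit Defensive.
Import Order.TTheory GRing.Theory Num.Theory.
Import numFieldNormedType.Exports.
Local Open Scope classical_set_scope.
Local Open Scope ring_scope.

Section Defs.
Variable R : realType.

Definition enorm (k : nat) (x : 'rV[R]_k) : R :=
  Num.sqrt (\sum_(i < k) (x ord0 i) ^+ 2).

(* Integral over R^k w.r.t. k-dimensional Lebesgue measure, realised as the
   iterated one-dimensional Lebesgue integral (Tonelli); used only on
   non-negative integrands. *)
Fixpoint rint (k : nat) : ('rV[R]_k -> \bar R) -> \bar R :=
  match k return ('rV[R]_k -> \bar R) -> \bar R with
  | 0 => fun f => f 0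
  | k'.+1 => fun f =>
      (\int[@lebesgue_measure R]_(t in [set: R])
         rint (fun v : 'rV[R]_k' => f (row_mx (const_mx t : 'rV[R]_1) v)))%E
  end.

Definition borel_measurable_fun (n m : nat)
    (u : 'rV[R]_n * 'rV[R]_m -> R) : Prop :=
  forall B : set R, measurable B ->
    <<s (@open ('rV[R]_n * 'rV[R]_m)%type) >> (u @^-1` B).

Definition bounded_Rnm (n m : nat) (O : set ('rV[R]_n * 'rV[R]_m)) : Prop :=
  exists M : R, forall xy, O xy -> enorm xy.1 ^+ 2 + enorm xy.2 ^+ 2 <= M.

Definition rint2 (n m : nat) (f : 'rV[R]_n * 'rV[R]_m -> \bar R) : \bar R :=
  rint (fun x => rint (fun y => f (x, y))).

Definition Wsp_seminorm_pow (n m : nat) (s p : R)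
    (u : 'rV[R]_n * 'rV[R]_m -> R) : \bar R :=
  (rint2 (fun xy => rint (fun z : 'rV[R]_n =>
       ((`|u xy - u (z, xy.2)| `^ p) / (enorm (xy.1 - z) `^ (n%:R + s * p)))%:E))
   + rint2 (fun xy => rint (fun w : 'rV[R]_m =>
       ((`|u xy - u (xy.1, w)| `^ p) / (enorm (xy.2 - w) `^ (m%:R + s * p)))%:E)))%E.

Definition Wsp_seminorm (n m : nat) (s p : R) (u : 'rV[R]_n * 'rV[R]_m -> R)
  : \bar R := poweR (Wsp_seminorm_pow s p u) p^-1.

Definition Wtilde (n m : nat) (s p : R) (O : set ('rV[R]_n * 'rV[R]_m))
    (u : 'rV[R]_n * 'rV[R]_m -> R) : Prop :=
  [/\ borel_measurable_fun u,
      (rint2 (fun xy => (`|u xy| `^ p)%:E) < +oo)%E,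
      (Wsp_seminorm_pow s p u < +oo)%E &
      forall xy, ~ O xy -> u xy = 0].

Definition Lp_norm_on (n m : nat) (p : R) (O : set ('rV[R]_n * 'rV[R]_m))
    (u : 'rV[R]_n * 'rV[R]_m -> R) : \bar R :=
  poweR (rint2 (fun xy => (\1_O xy * `|u xy| `^ p)%:E)) p^-1.

End Defs.

From HB Require Import structures.
From mathcomp Require Import all_boot all_order all_algebra.
From mathcomp Require Import all_classical all_reals all_analysis.
From mathcomp Require Import ring.
Import Order.TTheory GRing.Theory Num.Theory.
Import numFieldNormedType.Exports.
Local Open Scope classical_set_scope.
Local Open Scope ring_scope.

(* Since Omega is bounded, the cube Q = [a, a + 1]^n with a^2 > |M| (M a bound
   for |x|^2 + |y|^2 on Omega) satisfies (Q x R^m) `&` Omega = set0, while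
   |x - z|^2 <= D for (x, y) in Omega and z in Q.  As u vanishes off Omega,
   for such x, y, z
     |u(x,y)|^p = |u(x,y) - u(z,y)|^p
               <= D^((n+sp)/2) |u(x,y) - u(z,y)|^p / |x - z|^(n+sp). *)

(* No measurability is needed: the integral of a nonnegative function is the
   supremum of the integrals of the simple functions below it. *)
Section ge0_integralT.
Context {d : measure_display} {T : measurableType d} {R : realType}.
Variable mu : {measure set T -> \bar R}.
Local Open Scope ereal_scope.

Lemma le_ge0_integralT (f g : T -> \bar R) :
  (forall x, 0 <= f x) -> (forall x, f x <= g x) ->
  \int[mu]_x f x <= \int[mu]_x g x.
Proof.
move=> f0 fg; have g0 x : 0 <= g x by exact: le_trans (f0 x) (fg x).
rewrite !ge0_integralTE//; apply: ereal_sup_le => _ [h hf <-].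
by exists h => // x; exact: le_trans (hf x) (fg x).
Qed.

Lemma ge0_integralT_scale_le (c : R) (f : T -> \bar R) : (0 <= c)%R ->
  (forall x, 0 <= f x) -> c%:E * \int[mu]_x f x <= \int[mu]_x (c%:E * f x).
Proof.
move=> c0 f0; have cf0 x : 0 <= c%:E * f x by rewrite mule_ge0.
rewrite !ge0_integralTE// -ereal_supZl//; last first.
  by apply/set0P; eexists; exists nnsfun0 => // x /=; rewrite f0.
apply: ge_ereal_sup => _ [_ [h hf <-] <-]; apply: ereal_sup_ubound.
exists (scale_nnsfun h c0); last exact: sintegralrM.
by move=> x /=; rewrite EFinM lee_wpmul2l// ?lee_fin ?hf.
Qed.

End ge0_integralT.

Section iterated_integral.
Context {R : realType}.
Local Open Scope ereal_scope.

Lemma rint_ge0 (k : nat) (f : 'rV[R]_k -> \bar R) :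
  (forall v, 0 <= f v) -> 0 <= rint f.
Proof.
elim: k f => [|k IH] f f0 /=; first exact: f0.
by apply: integral_ge0 => t _; apply: IH.
Qed.

Lemma le_rint (k : nat) (f g : 'rV[R]_k -> \bar R) :
  (forall v, 0 <= f v) -> (forall v, f v <= g v) -> rint f <= rint g.
Proof.
elim: k f g => [|k IH] f g f0 fg /=; first exact: fg.
by apply: le_ge0_integralT => t; [exact: rint_ge0 | exact: IH].
Qed.

Lemma rint_scale_le (k : nat) (c : R) (f : 'rV[R]_k -> \bar R) : (0 <= c)%R ->
  (forall v, 0 <= f v) -> c%:E * rint f <= rint (fun v => c%:E * f v).
Proof.
elim: k f => [|k IH] f c0 f0 //=.
apply: le_trans.
  by apply: ge0_integralT_scale_le c0 _ => t; exact: rint_ge0.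
apply: le_ge0_integralT => t; first by rewrite mule_ge0// rint_ge0.
exact: IH.
Qed.

Lemma rint2_ge0 (n m : nat) (f : 'rV[R]_n * 'rV[R]_m -> \bar R) :
  (forall xy, 0 <= f xy) -> 0 <= rint2 f.
Proof. by move=> f0; apply: rint_ge0 => x; apply: rint_ge0 => y. Qed.

Lemma le_rint2 (n m : nat) (f g : 'rV[R]_n * 'rV[R]_m -> \bar R) :
  (forall xy, 0 <= f xy) -> (forall xy, f xy <= g xy) -> rint2 f <= rint2 g.
Proof.
move=> f0 fg; apply: le_rint => [x|x]; first by apply: rint_ge0 => y.
exact: le_rint.
Qed.

Lemma rint2_scale_le (n m : nat) (c : R) (f : 'rV[R]_n * 'rV[R]_m -> \bar R) :
  (0 <= c)%R -> (forall xy, 0 <= f xy) ->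
  c%:E * rint2 f <= rint2 (fun xy => c%:E * f xy).
Proof.
move=> c0 f0; apply: le_trans.
  by apply: rint_scale_le c0 _ => x; exact: rint_ge0.
apply: le_rint => [x|x]; first by rewrite mule_ge0// rint_ge0.
exact: rint_scale_le.
Qed.

End iterated_integral.

Section unit_cube.
Context {R : realType}.
Implicit Types (a c t : R) (k : nat).

Definition unit_cube {k} a : set 'rV[R]_k :=
  [set v | forall i, a <= v ord0 i <= a + 1].

Lemma unit_cube_row k a t (v : 'rV[R]_k) :
  unit_cube a (row_mx (const_mx t : 'rV_1) v) =
  ((a <= t <= a + 1) /\ unit_cube a v).
Proof.
have lshift0 : row_mx (const_mx t : 'rV_1) v ord0 (lshift k ord0) = t.
  by rewrite row_mxEl mxE.
rewrite propeqE; split=> [cv|[ta cv] i].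
  split=> [|i]; first by rewrite -lshift0; apply: cv.
  by rewrite -(row_mxEr (const_mx t : 'rV_1)); apply: cv.
by case: (split_ordP i) => j ->; rewrite ?(ord1 j) ?lshift0 ?row_mxEr.
Qed.

Lemma indic_unit_cube_row k a t (v : 'rV[R]_k) :
  \1_(unit_cube a) (row_mx (const_mx t : 'rV_1) v) =
  \1_(`[a, a + 1]%classic) t * \1_(unit_cube a) v :> R.
Proof.
rewrite !indicE.
have [/set_mem tI|tI] := boolP (t \in _); have [/set_mem cv|cv] := boolP (v \in _).
- by rewrite mul1r mem_set// unit_cube_row.
- by rewrite mulr0 memNset// unit_cube_row => -[_ cv']; rewrite mem_set in cv.
- rewrite /= mul0r memNset// unit_cube_row => -[tI' _].
  by move: tI; rewrite mem_set //= in_itv.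
- rewrite /= mul0r memNset// unit_cube_row => -[tI' _].
  by move: tI; rewrite mem_set //= in_itv.
Qed.

Lemma rint_unit_cube k a c : 0 <= c ->
  rint (fun v : 'rV[R]_k => (c * \1_(unit_cube a) v)%:E) = c%:E.
Proof.
elim: k c => [|k IH] c c0 /=.
  by rewrite indicE mem_set ?mulr1 // => i; case: i.
under eq_integral => t _.
  under eq_fun => v do rewrite indic_unit_cube_row mulrA.
  rewrite IH ?mulr_ge0 //; over.
rewrite integralZl_indic //=; last by move=> /lt_geF; rewrite c0.
rewrite integral_indic // setIT -[RHS]mule1; congr (_ * _)%E.
have := lebesgue_measure_itv `[a, a + 1].
by rewrite /= lte_fin ltrDl ltr01 -EFinD addrAC subrr add0r.
Qed.

End unit_cube.

Section enorm.
Context {R : realType} {k : nat}.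
Implicit Types (a : R) (x z : 'rV[R]_k).

Lemma enorm_sqr x : enorm x ^+ 2 = \sum_(i < k) x ord0 i ^+ 2.
Proof. by rewrite sqr_sqrtr // sumr_ge0 // => i _; rewrite sqr_ge0. Qed.

Lemma enorm_gt0 x : x != 0 -> 0 < enorm x.
Proof.
move=> x0; have x2_ge0 (i : 'I_k) : true -> 0 <= x ord0 i ^+ 2.
  by move=> _; exact: sqr_ge0.
rewrite sqrtr_gt0 lt_def sumr_ge0 // andbT.
apply: contra x0 => /eqP /(psumr_eq0P x2_ge0) x0.
by apply/eqP/matrixP => i j; rewrite (ord1 i) mxE; apply/eqP; rewrite -sqrf_eq0 x0.
Qed.

Lemma unit_cube_enorm_ge a z : (0 < k)%N -> 0 <= a -> unit_cube a z ->
  a ^+ 2 <= enorm z ^+ 2.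
Proof.
move=> k0 a0 zc; have /andP[zl _] := zc (Ordinal k0).
rewrite enorm_sqr (bigD1 (Ordinal k0)) //= -[leLHS]addr0 lerD //.
  by rewrite ler_sqr ?nnegrE // (le_trans a0 zl).
by rewrite sumr_ge0 // => i _; rewrite sqr_ge0.
Qed.

Lemma unit_cube_enorm_subr_le a x z : 0 <= a -> unit_cube a z ->
  enorm (x - z) ^+ 2 <= 2 * enorm x ^+ 2 + (2 * (a + 1) ^+ 2) *+ k.
Proof.
move=> a0 zc; rewrite !enorm_sqr.
apply: (@le_trans _ _
  (\sum_(i < k) (2 * x ord0 i ^+ 2 + 2 * (a + 1) ^+ 2))); last first.
  by rewrite big_split /= sumr_const card_ord mulr_sumr.
apply: ler_sum => i _; rewrite !mxE.
have /andP[zl zu] := zc i; have z0 : 0 <= z ord0 i by exact: le_trans zl.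
apply: (@le_trans _ _ (2 * x ord0 i ^+ 2 + 2 * z ord0 i ^+ 2)).
  by rewrite -subr_ge0 (_ : _ - _ = (x ord0 i + z ord0 i) ^+ 2) ?sqr_ge0 //; ring.
by rewrite lerD2l ler_pM2l // ler_sqr ?nnegrE // addr_ge0.
Qed.

End enorm.

Section cube_outside_domain.
Context {R : realType}.
Variables (n m : nat) (Omega : set ('rV[R]_n * 'rV[R]_m)) (M : R).
Hypothesis n_gt0 : (0 < n)%N.
Hypothesis Omega_bounded :
  forall xy, Omega xy -> enorm xy.1 ^+ 2 + enorm xy.2 ^+ 2 <= M.

Definition cube_corner : R := Num.sqrt `|M| + 1.

Definition cube_diam2 : R := 2 * `|M| + (2 * (cube_corner + 1) ^+ 2) *+ n.

Lemma cube_corner_ge0 : 0 <= cube_corner.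
Proof. by rewrite addr_ge0 ?sqrtr_ge0. Qed.

Lemma cube_diam2_gt0 : 0 < cube_diam2.
Proof.
rewrite ltr_wpDl ?mulr_ge0 // pmulrn_lgt0 // mulr_gt0 // exprn_gt0 //.
by rewrite ltr_wpDl ?cube_corner_ge0.
Qed.

Lemma unit_cube_outside z y : unit_cube cube_corner z -> ~ Omega (z, y).
Proof.
move=> zc /Omega_bounded /= zyM.
have : `|M| < cube_corner ^+ 2.
  rewrite sqrrD1 sqr_sqrtr // -addrA ltrDl.
  by rewrite ltr_wpDl ?ltr01 // mulrn_wge0 // sqrtr_ge0.
rewrite ltNge => /negP; apply; apply: le_trans (_ : _ <= M) (ler_norm M).
apply: le_trans (unit_cube_enorm_ge _ _ n_gt0 cube_corner_ge0 zc) _.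
by apply: le_trans zyM; rewrite lerDl sqr_ge0.
Qed.

Lemma unit_cube_dist x y z : Omega (x, y) -> unit_cube cube_corner z ->
  enorm (x - z) <= Num.sqrt cube_diam2.
Proof.
move=> xyO zc; have D0 := ltW cube_diam2_gt0.
rewrite -ler_sqr ?nnegrE ?sqrtr_ge0 // [leRHS]sqr_sqrtr //.
apply: (le_trans (unit_cube_enorm_subr_le _ x _ cube_corner_ge0 zc)).
rewrite /cube_diam2 lerD2r ler_pM2l // (le_trans _ (ler_norm M)) //.
by rewrite (le_trans _ (Omega_bounded _ xyO)) //= lerDl sqr_ge0.
Qed.

Variables (s p : R) (u : 'rV[R]_n * 'rV[R]_m -> R).
Hypotheses (s_ge0 : 0 <= s) (p_gt0 : 0 < p).
Hypothesis u_out : forall xy, ~ Omega xy -> u xy = 0.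

Definition poincare_const : R := Num.sqrt cube_diam2 `^ (n%:R + s * p).

Lemma poincare_const_gt0 : 0 < poincare_const.
Proof. by rewrite powR_gt0 // sqrtr_gt0 cube_diam2_gt0. Qed.

Lemma indic_unit_cube_le_quotient x y z :
  `|u (x, y)| `^ p / poincare_const * \1_(unit_cube cube_corner) z <=
  `|u (x, y) - u (z, y)| `^ p / enorm (x - z) `^ (n%:R + s * p).
Proof.
have [zc|zc] := pselect (unit_cube cube_corner z); last first.
  by rewrite indicE memNset // mulr0 divr_ge0 ?powR_ge0.
have [xyO|xyO] := pselect (Omega (x, y)); last first.
  by rewrite u_out // normr0 powR0 ?gt_eqF // !mul0r divr_ge0 ?powR_ge0.
rewrite indicE mem_set // mulr1 (u_out _ (unit_cube_outside _ y zc)).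
rewrite subr0 ler_wpM2l ?powR_ge0 // lef_pV2 ?posrE ?poincare_const_gt0 //.
  have q_ge0 : 0 <= n%:R + s * p by rewrite addr_ge0 // mulr_ge0 // ltW.
  rewrite /poincare_const.
  apply: ge0_ler_powR; rewrite ?nnegrE ?sqrtr_ge0 //.
  exact: unit_cube_dist _ _ _ xyO zc.
rewrite powR_gt0 // enorm_gt0 // subr_eq0.
by apply/eqP => xz; apply: (unit_cube_outside _ y zc); rewrite -xz.
Qed.

Local Open Scope ereal_scope.

Lemma powR_div_le_rint_quotient x y :
  (`|u (x, y)| `^ p / poincare_const)%:E <=
  rint (fun z => (`|u (x, y) - u (z, y)| `^ p / enorm (x - z) `^ (n%:R + s * p))%:E).
Proof.
have C_ge0 := ltW poincare_const_gt0.
rewrite -(rint_unit_cube n cube_corner) ?divr_ge0 ?powR_ge0 //.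
apply: le_rint => z; last by rewrite lee_fin indic_unit_cube_le_quotient.
by rewrite lee_fin mulr_ge0 ?divr_ge0 ?powR_ge0.
Qed.

Lemma Lp_pow_le_Wsp_seminorm_pow :
  rint2 (fun xy => (\1_Omega xy * `|u xy| `^ p)%:E) <=
  poincare_const%:E * Wsp_seminorm_pow s p u.
Proof.
have C_gt0 := poincare_const_gt0.
have Ci_ge0 : (0 <= poincare_const^-1)%R by rewrite invr_ge0 ltW.
have f_ge0 xy : 0 <= (\1_Omega xy * `|u xy| `^ p)%:E.
  by rewrite lee_fin mulr_ge0 ?powR_ge0 // indicE ler0n.
rewrite -[X in X <= _]mul1e -(@divff _ poincare_const) ?gt_eqF // EFinM -muleA.
apply: lee_wpmul2l; first by rewrite lee_fin ltW.
apply: le_trans; first by apply: rint2_scale_le.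
apply: le_trans (leeDl _ _); last first.
  apply: rint2_ge0 => xy; apply: rint_ge0 => w.
  by rewrite lee_fin divr_ge0 ?powR_ge0.
apply: le_rint2 => [[x y]|[x y]]; first by rewrite mule_ge0 ?lee_fin.
apply: le_trans (powR_div_le_rint_quotient x y).
rewrite -EFinM lee_fin mulrC ler_wpM2r //.
by rewrite ler_piMl ?powR_ge0 // indicE lern1 leq_b1.
Qed.

End cube_outside_domain.

Lemma poweR_inv_le_mul (R : realType) (c p : R) (x y : \bar R) :
  0 < c -> 0 < p -> (0 <= x)%E -> (0 <= y)%E -> (x <= c%:E * y)%E ->
  (poweR x p^-1 <= (c `^ p^-1)%:E * poweR y p^-1)%E.
Proof.
move=> c0 p0 x0 y0 xy; have c_ge0 := ltW c0.
rewrite -poweR_EFin -poweRM ?lee_fin //.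
apply: gt0_ler_poweR => //; first by rewrite invr_ge0 ltW.
  by rewrite in_itv /= x0 leey.
by rewrite in_itv /= mule_ge0 ?lee_fin // leey.
Qed.

Lemma Wsp_seminorm_pow_ge0 (R : realType) (n m : nat) (s p : R)
    (u : 'rV[R]_n * 'rV[R]_m -> R) :
  (0 <= Wsp_seminorm_pow s p u)%E.
Proof.
by apply: adde_ge0; apply: rint2_ge0 => xy; apply: rint_ge0 => z;
  rewrite lee_fin divr_ge0 ?powR_ge0.
Qed.

Theorem lemma2p6 (R : realType) (n m : nat) (Omega : set ('rV[R]_n * 'rV[R]_m))
  (s p : R) :
  (0 < n)%N -> (0 < m)%N ->
  open Omega -> bounded_Rnm Omega ->
  0 < s < 1 -> 1 < p ->
  exists C : R, 0 < C /\
    forall u : 'rV[R]_n * 'rV[R]_m -> R, Wtilde s p Omega u ->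
      (Lp_norm_on p Omega u <= C%:E * Wsp_seminorm s p u)%E.
Proof.
move=> n_gt0 _ _ [M Omega_bounded] /andP[s_gt0 _] p_gt1.
have p_gt0 : 0 < p by exact: lt_trans p_gt1.
have C_gt0 := poincare_const_gt0 _ M n_gt0 s p.
exists (poincare_const n M s p `^ p^-1); split; first by rewrite powR_gt0.
move=> u [_ _ _ u_out]; apply: poweR_inv_le_mul => //.
- by apply: rint2_ge0 => xy; rewrite lee_fin mulr_ge0 ?powR_ge0 // indicE ler0n.
- exact: Wsp_seminorm_pow_ge0.
- by apply: Lp_pow_le_Wsp_seminorm_pow => //; exact: ltW.
Qed.
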